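(* Let $\alpha=(\alpha_1,\ldots,\alpha_n)$ be a composition, $\sigma\in S_n$, and $i\in\{1,\ldots,n-1\}$ with $\alpha_i=\alpha_{i+1}$. The restriction $P_i:\mathrm{NAF}(\alpha,\sigma)\times\mathrm{NAF}(\alpha,\sigma s_i)\to\mathbb{Q}(q,t)$ is a probability map, i.e. $\sum_{U\in\mathrm{NAF}(\alpha,\sigma s_i)}P_i(T,U)=1$ for every $T\in\mathrm{NAF}(\alpha,\sigma)$.
   Context: Permutations are in one-line notation; $\sigma s_i$ is $\sigma$ with the entries in positions $i,i+1$ exchanged. A composition is a sequence of nonnegative integers. The skyline diagram is $\mathrm{dg}(\alpha)=\{(j,r):1\le j\le n,\ 1\le r\le\alpha_j\}$ ($j$ = column, $r$ = row) and the augmented diagram is $\mathrm{adg}(\alpha)=\mathrm{dg}(\alpha)\cup\{(j,0):1\le j\le n\}$ (row $0$ is the basement). For $u=(j,r)\in\mathrm{dg}(\alpha)$: $\mathrm{leg}(u)=\alpha_j-r$; the left arm set is $\{(j',r-1)\in\mathrm{adg}(\alpha):j'<j,\ \alpha_{j'}<\alpha_j\}$, the right arm set is $\{(j',r)\in\mathrm{dg}(\alpha):j'>j,\ \alpha_{j'}\le\alpha_j\}$, $\mathrm{Arm}(u)$ is their union and $\mathrm{arm}(u)=|\mathrm{Arm}(u)|$. Two boxes of $\mathrm{adg}(\alpha)$ attack each other if they are in the same row, or in consecutive rows with the box in the higher row strictly to the right of the box in the lower row. A filling of shape $\alpha$ and basement $\tau\in S_n$ is a map $T:\mathrm{adg}(\alpha)\to\{1,\ldots,n\}$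 with $T(j,0)=\tau_j$; $\mathrm{F}(\alpha,\tau)$ is the set of these, and $\mathrm{NAF}(\alpha,\tau)$ the subset of non-attacking ones (attacking boxes have distinct entries). For integers $a,b$ let $\chi(a,b)=1$ if $a>b$ and $0$ otherwise, and $\chi(a,b,c)=\chi(a,b)+\chi(b,c)-\chi(a,c)$. Fix $i$ with $\alpha_i=\alpha_{i+1}$. For a filling $T$ and $0\le r\le\alpha_i$, $\mathrm{swap}_r(T)$ exchanges the entries of boxes $(i,r)$ and $(i+1,r)$, and $\Omega_{0,h}=\mathrm{swap}_h\circ\cdots\circ\mathrm{swap}_0$. For $T\in\mathrm{NAF}(\alpha,\tau)$ and $0\le r\le\alpha_i-1$, let $a=T(i,r)$, $b=T(i+1,r)$, $c=T(i,r+1)$, $d=T(i+1,r+1)$, $A=\mathrm{arm}(i+1,r+1)$, $\ell=\mathrm{leg}(i+1,r+1)$, and define $\rho_r(T)\in\mathbb{Q}(q,t)$: if $a,b,c,d$ are distinct, $\rho_r(T)=0$ when $\chi(c,d,a)=\chi(c,d,b)$ and $\rho_r(T)=1$ when $\chi(c,d,a)=\chi(d,c,b)$; if exactly three of them are distinct, then $\rho_r(T)=0$ if $b=c$, $\rho_r(T)=1$ if $b=d$, and $\rho_r(T)=t^{1-\chi(d,a,b)}\frac{1-q^{\ell+1}t^{A+1}}{1-q^{\ell+1}t^{A+2}}$ if $a=c$; if $a=c$ and $b=d$, $\rho_r(T)=1$. Also set $\rho_{\alpha_i}(T)=0$. For $T\in\mathrm{NAF}(\alpha,\tau)$ and $U\in\mathrm{F}(\alpha,\tau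 s_i)$, $P_i(T,U)=\left(\prod_{r=0}^{h-1}\rho_r(T)\right)(1-\rho_h(T))$ if $U=\Omega_{0,h}(T)$ for some $h\in\{0,\ldots,\alpha_i\}$, and $P_i(T,U)=0$ otherwise. A probability map $\mathbf{T}\times\mathbf{U}\to\mathbb{Q}(q,t)$ is a function $P$ with $\sum_{U\in\mathbf{U}}P(T,U)=1$ for all $T\in\mathbf{T}$. *)

From HB Require Import structures.
From mathcomp Require Import all_boot all_order all_algebra all_fingroup.
From mathcomp Require Import fraction.
Set Implicit Arguments. Unset Strict Implicit. Unset Printing Implicit Defensive.
Import Order.TTheory GRing.Theory Num.Theory.

(* Conventions (0-indexed): columns j : 'I_n (paper column j+1), entries in
   'I_n (paper entry e+1), rows r : nat with row 0 = basement.
   A composition of length n is alpha : 'I_n -> nat. *)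

(* Q(q,t) = fraction field of Q[t][q]. *)
Definition Qqt := {fraction {poly {poly rat}}}.
Definition qv : Qqt := tofrac ('X : {poly {poly rat}}).
Definition tv : Qqt := tofrac (('X : {poly rat})%:P).

Definition rowbound n (alpha : 'I_n -> nat) : nat := \max_(j < n) alpha j.

Definition box n (alpha : 'I_n -> nat) := ('I_n * 'I_(rowbound alpha).+1)%type.

(* A filling is encoded as a finite function on candidate boxes; boxes
   outside adg(alpha) carry None, boxes of adg(alpha) carry Some entry. *)
Definition filling n (alpha : 'I_n -> nat) := {ffun box alpha -> option 'I_n}.

Definition in_adg n (alpha : 'I_n -> nat) (u : box alpha) : bool :=
  u.2 <= alpha u.1.

Definition is_filling n (alpha : 'I_n -> nat) (tau : 'S_n) (T : filling alpha) : bool :=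
  [forall u : box alpha, (T u != None) == in_adg u] &&
  [forall j : 'I_n, T (j, ord0) == Some (tau j)].

Definition attack n (alpha : 'I_n -> nat) (u v : box alpha) : bool :=
  [|| val u.2 == val v.2,
      (val v.2 == (val u.2).+1) && (val u.1 < val v.1) |
      (val u.2 == (val v.2).+1) && (val v.1 < val u.1)].

Definition nonattacking n (alpha : 'I_n -> nat) (T : filling alpha) : bool :=
  [forall u : box alpha, forall v : box alpha,
     [&& in_adg u, in_adg v, u != v & attack u v] ==> (T u != T v)].

Definition F n (alpha : 'I_n -> nat) (tau : 'S_n) : {set filling alpha} :=
  [set T | is_filling tau T].

Definition NAF n (alpha : 'I_n -> nat) (tau : 'S_n) : {set filling alpha} :=
  [set T | is_filling tau T && nonattacking T].

Definition leg n (alpha : 'I_n -> nat) (j : 'I_n) (r : nat) : nat := alpha j - r.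

Definition arm n (alpha : 'I_n -> nat) (j : 'I_n) (r : nat) : nat :=
  #|[set j' : 'I_n | [&& j' < j, alpha j' < alpha j & r - 1 <= alpha j']]| +
  #|[set j' : 'I_n | [&& j < j', alpha j' <= alpha j & 1 <= r <= alpha j']]|.

Definition chi (a b : nat) : int := (a > b)%:Z.
Definition chi3 (a b c : nat) : int := chi a b + chi b c - chi a c.

(* the value rho_r(T) from the four entries a=T(i,r), b=T(i+1,r),
   c=T(i,r+1), d=T(i+1,r+1), the arm A and leg l of (i+1,r+1).
   Patterns that cannot occur in a non-attacking filling get 0. *)
Definition rho_val (a b c d : nat) (A l : nat) : Qqt :=
  (if uniq [:: a; b; c; d] then
    (if chi3 c d a == chi3 c d b then 0%R
     else if chi3 c d a == chi3 d c b then 1%R else 0%R)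
  else if (a == c) && (b == d) then 1
  else if size (undup [:: a; b; c; d]) == 3 then
    (if b == c then 0
     else if b == d then 1
     else if a == c then
       (tv ^ (1 - chi3 d a b) * (1 - qv ^+ l.+1 * tv ^+ A.+1)
                              / (1 - qv ^+ l.+1 * tv ^+ A.+2))%R
     else 0)
  else 0)%R.

Definition entry n (alpha : 'I_n -> nat) (T : filling alpha) (j : 'I_n) (r : nat)
  : option 'I_n := T (j, inord r).

Definition rho n (alpha : 'I_n -> nat) (i i1 : 'I_n) (T : filling alpha) (r : nat) : Qqt :=
  if r < alpha i then
    match entry T i r, entry T i1 r, entry T i r.+1, entry T i1 r.+1 with
    | Some a, Some b, Some c, Some d =>
        rho_val a b c d (arm alpha i1 r.+1) (leg alpha i1 r.+1)
    | _, _, _, _ => 0%R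
    end
  else 0%R.

Definition swap n (alpha : 'I_n -> nat) (i i1 : 'I_n) (r : nat) (T : filling alpha)
  : filling alpha :=
  [ffun u : box alpha => if val u.2 == r then T (tperm i i1 u.1, u.2) else T u].

Definition Omega n (alpha : 'I_n -> nat) (i i1 : 'I_n) (h : nat) (T : filling alpha)
  : filling alpha :=
  foldl (fun T' r => swap i i1 r T') T (iota 0 h.+1).

Definition Pi n (alpha : 'I_n -> nat) (i i1 : 'I_n) (T U : filling alpha) : Qqt :=
  match [pick h : 'I_(alpha i).+1 | U == Omega i i1 h T] with
  | Some h => ((\prod_(r < h) rho i i1 T r) * (1 - rho i i1 T h))%R
  | None => 0%R
  end.

(* Let w_h = rho_0 ... rho_(h-1) (1 - rho_h), the weight P_i(T, Omega_(0,h) T).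
   The fillings Omega_(0,h) T, 0 <= h <= alpha_i, are pairwise distinct (they
   differ in box (i, h') for the larger index h'), so the sum over U is the sum
   of w_h over the h for which Omega_(0,h) T is non-attacking.  If moreover
   Omega_(0,h) T is non-attacking whenever w_h <> 0, this is the sum of all w_h,
   which telescopes to 1 - rho_0 ... rho_(alpha_i) = 1 as rho_(alpha_i) = 0.
   Since columns i and i+1 have equal height, swapping their rows 0..h only
   moves entries within rows, and the one attacking pair whose order of columns
   gets reversed is (i, r), (i+1, r+1) with r <= h: it now carries T(i+1, r)
   against T(i, r+1) when r < h, and T(i+1, h) against T(i+1, h+1) when r = h.
   Equality forces rho_r = 0 (the case b = c) resp. rho_h = 1 (the case b = d). *)

From mathcomp Require Import all_boot all_algebra all_fingroup.
From mathcomp Require Import zify.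
Set Implicit Arguments. Unset Strict Implicit. Unset Printing Implicit Defensive.
Import GRing.Theory.

Lemma sum_prod_telescope (R : comPzRingType) (f : nat -> R) m :
  (\sum_(h < m) (\prod_(r < h) f r) * (1 - f h) = 1 - \prod_(r < m) f r)%R.
Proof.
elim: m => [|m IHm]; first by rewrite !big_ord0 subrr.
by rewrite big_ord_recr /= IHm big_ord_recr /= mulrBr mulr1 addrA subrK.
Qed.

Section AdjacentTransposition.

Variables (n : nat) (i i1 : 'I_n).
Hypothesis i1E : val i1 = (val i).+1.

Lemma tperm_adj_val (z : 'I_n) :
  val (tperm i i1 z) = if z == i then val i1 else if z == i1 then val i else val z.
Proof.
case: tpermP => [->|->|/eqP/negbTE-> /eqP/negbTE->]; rewrite ?eqxx //.
by case: ifP => // /eqP ->.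
Qed.

Lemma tperm_adj_ltn (x y : 'I_n) : (x < y)%N -> ~~ ((x == i) && (y == i1)) ->
  (tperm i i1 x < tperm i i1 y)%N /\ (tperm i i1 x < y)%N.
Proof.
rewrite !tperm_adj_val -!(inj_eq val_inj) i1E /=.
move: (val x) (val y) (val i) => a b c.
by case: (a =P c); case: (b =P c); case: (a =P c.+1); case: (b =P c.+1) => /=; lia.
Qed.

Lemma tperm_adj_rows_ltn (h r : nat) (x y : 'I_n) :
  (x < y)%N -> ~~ [&& x == i, y == i1 & (r <= h)%N] ->
  ((if (r <= h)%N then tperm i i1 x else x) <
   (if (r.+1 <= h)%N then tperm i i1 y else y))%N.
Proof.
move=> lt_xy regular; case: (ltngtP r h) regular => [lt_rh|lt_hr|eq_rh] regular.
- by rewrite andbT in regular; have [] := tperm_adj_ltn lt_xy regular.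
- by [].
- by rewrite andbT in regular; have [] := tperm_adj_ltn lt_xy regular.
Qed.

End AdjacentTransposition.

Lemma rho_val_bc (a b d A l : nat) : a != b -> rho_val a b b d A l = 0%R.
Proof.
move=> /negbTE ab; rewrite /rho_val /= !inE eqxx ab /= andbF.
by case: ifP.
Qed.

Lemma rho_val_bd (a b c A l : nat) : a != b -> c != b -> rho_val a b c b A l = 1%R.
Proof.
move=> /negbTE ab /negbTE cb; rewrite /rho_val /= !inE ab cb eqxx /= !orbT andbF.
by case: (a =P c) => [//|_]; rewrite (eq_sym b) cb.
Qed.

Section Fillings.

Variables (n : nat) (alpha : 'I_n -> nat).
Implicit Types (tau : 'S_n) (T : filling alpha).

Lemma row_inordK (j : 'I_n) r :
  (r <= alpha j)%N -> val (inord r : 'I_(rowbound alpha).+1) = r.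
Proof. by move=> le_r; apply: inordK; rewrite ltnS (leq_trans le_r) ?leq_bigmax. Qed.

Lemma entry_ord T j (r : 'I_(rowbound alpha).+1) : entry T j r = T (j, r).
Proof. by rewrite /entry inord_val. Qed.

Lemma NAF_filling tau T : T \in NAF alpha tau -> is_filling tau T.
Proof. by rewrite inE => /andP[]. Qed.

Lemma NAF_nonattack tau T (u v : box alpha) : T \in NAF alpha tau ->
  in_adg u -> in_adg v -> u != v -> attack u v -> T u != T v.
Proof.
rewrite inE => /andP[_ /forallP TN] adg_u adg_v uv att.
by move/forallP: (TN u) => /(_ v); rewrite adg_u adg_v uv att.
Qed.

Lemma filling_entry tau T j r :
  is_filling tau T -> (r <= alpha j)%N -> exists e, entry T j r = Some e.
Proof.
case/andP => /forallP dom_T _ le_r.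
move/eqP: (dom_T (j, inord r)); rewrite /in_adg /= (row_inordK le_r) le_r /entry.
by case: (T _) => [e|] // _; exists e.
Qed.

Lemma NAF_entry_row tau T j j' r : T \in NAF alpha tau -> j != j' ->
  (r <= alpha j)%N -> (r <= alpha j')%N -> entry T j r != entry T j' r.
Proof.
move=> TN jj' le_r le_r'; apply: (NAF_nonattack TN).
- by rewrite /in_adg /= (row_inordK le_r).
- by rewrite /in_adg /= (row_inordK le_r').
- by apply: contra jj' => /eqP[->].
- by rewrite /attack /= eqxx.
Qed.

Lemma OmegaE (i i1 : 'I_n) h T x (r : 'I_(rowbound alpha).+1) :
  Omega i i1 h T (x, r) = T (if (r <= h)%N then tperm i i1 x else x, r).
Proof.
elim: h x => [|h IHh] x; first by rewrite /Omega /= /swap ffunE leqn0; case: eqP.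
rewrite /Omega -[h.+2]addn1 iotaD foldl_cat -/(Omega i i1 h T) /= /swap ffunE /= add0n !IHh.
by case: eqP => [->|/eqP ne]; rewrite ?ltnn ?leqnn // (leq_eqVlt r h.+1) (negbTE ne).
Qed.

Section EqualAdjacentColumns.

Variables (i i1 : 'I_n).
Hypotheses (i1E : val i1 = (val i).+1) (alpha_i1 : alpha i = alpha i1).

Lemma adj_neq : i != i1.
Proof. by apply/eqP => ii1; move: i1E; rewrite -ii1; lia. Qed.

Lemma alpha_tperm z : alpha (tperm i i1 z) = alpha z.
Proof. by case: tpermP => [->|->|]. Qed.

Lemma rho_bc tau T r : T \in NAF alpha tau -> (r < alpha i)%N ->
  entry T i1 r = entry T i r.+1 -> rho i i1 T r = 0%R.
Proof.
move=> TN lt_r bc; have T_fill := NAF_filling TN.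
have lt_r1 : (r < alpha i1)%N by rewrite -alpha_i1.
have [a Ea] := filling_entry T_fill (ltnW lt_r).
have [b Eb] := filling_entry T_fill (ltnW lt_r1).
have [d Ed] := filling_entry T_fill lt_r1.
have := NAF_entry_row TN adj_neq (ltnW lt_r) (ltnW lt_r1).
rewrite /rho lt_r Ea -bc Eb Ed => ab.
by apply: rho_val_bc; apply: contra ab => /eqP/val_inj->.
Qed.

Lemma rho_bd tau T r : T \in NAF alpha tau -> (r < alpha i)%N ->
  entry T i1 r = entry T i1 r.+1 -> rho i i1 T r = 1%R.
Proof.
move=> TN lt_r bd; have T_fill := NAF_filling TN.
have lt_r1 : (r < alpha i1)%N by rewrite -alpha_i1.
have [a Ea] := filling_entry T_fill (ltnW lt_r).
have [b Eb] := filling_entry T_fill (ltnW lt_r1).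
have [c Ec] := filling_entry T_fill lt_r.
have := NAF_entry_row TN adj_neq (ltnW lt_r) (ltnW lt_r1).
have := NAF_entry_row TN adj_neq lt_r lt_r1.
rewrite /rho lt_r Ea Eb Ec -bd Eb => cb ab.
by apply: rho_val_bd; [apply: contra ab | apply: contra cb] => /eqP/val_inj->.
Qed.

Lemma Omega_filling sigma h T : is_filling sigma T ->
  is_filling (tperm i i1 * sigma)%g (Omega i i1 h T).
Proof.
case/andP => /forallP dom_T /forallP base_T; apply/andP; split; apply/forallP.
  move=> [x r]; rewrite OmegaE; case: ifP => _; last exact: dom_T.
  by have := dom_T (tperm i i1 x, r); rewrite /in_adg /= alpha_tperm.
by move=> j; rewrite OmegaE /= permM; apply: base_T.
Qed.

Lemma Omega_diag_neq sigma h T : T \in NAF alpha sigma ->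
  (forall r, (r < h)%N -> rho i i1 T r != 0%R) -> rho i i1 T h != 1%R ->
  forall (x y : 'I_n) (r r' : 'I_(rowbound alpha).+1),
  r' = r.+1 :> nat -> (x < y)%N -> (r <= alpha x)%N -> (r' <= alpha y)%N ->
  Omega i i1 h T (x, r) != Omega i i1 h T (y, r').
Proof.
move=> TN rho_ne0 rho_ne1 x y r r' r'E lt_xy adg_x adg_y.
rewrite !OmegaE r'E.
have [/and3P[/eqP-> /eqP yE le_rh] | regular] := boolP [&& x == i, y == i1 & (r <= h)%N].
  have lt_r : (r < alpha i)%N by rewrite alpha_i1 -yE -r'E.
  rewrite le_rh tpermL yE -!entry_ord r'E.
  case: (ltnP r h) => [lt_rh | le_hr].
    rewrite tpermR; apply: contra (rho_ne0 r lt_rh) => /eqP bc.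
    by rewrite (rho_bc TN lt_r bc).
  have hr : h = r by apply/eqP; rewrite eqn_leq le_hr le_rh.
  by apply: contra rho_ne1 => /eqP bd; rewrite hr (rho_bd TN lt_r bd).
apply: (NAF_nonattack TN).
- by rewrite /in_adg /=; case: ifP; rewrite ?alpha_tperm.
- by rewrite /in_adg /= r'E; case: ifP; rewrite ?alpha_tperm -?r'E.
- by apply/eqP => -[_ rr']; move: r'E; rewrite rr' => /eqP; rewrite ltn_eqF.
- by rewrite /attack /= r'E (tperm_adj_rows_ltn i1E lt_xy regular) eqxx /= orbT.
Qed.

Lemma Omega_NAF sigma h T : T \in NAF alpha sigma ->
  (forall r, (r < h)%N -> rho i i1 T r != 0%R) -> rho i i1 T h != 1%R ->
  Omega i i1 h T \in NAF alpha (tperm i i1 * sigma)%g.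
Proof.
move=> TN rho_ne0 rho_ne1; rewrite inE Omega_filling ?(NAF_filling TN) //=.
apply/forallP => -[x r]; apply/forallP => -[y r'].
apply/implyP => /and4P[adg_x adg_y xy].
rewrite /attack /= => /or3P[/eqP/val_inj rr' | /andP[/eqP r'E lt_xy] | /andP[/eqP rE lt_yx]].
- move: xy adg_y; rewrite -rr' !OmegaE => xy adg_y.
  case: ifP => _; apply: (NAF_nonattack TN); rewrite /in_adg /attack /= ?alpha_tperm ?eqxx //.
  by apply: contra xy => /eqP[/perm_inj->].
- exact: (Omega_diag_neq TN rho_ne0 rho_ne1 r'E).
- by rewrite eq_sym; apply: (Omega_diag_neq TN rho_ne0 rho_ne1 rE).
Qed.

Lemma Omega_inj sigma T h h' : T \in NAF alpha sigma ->
  (h <= alpha i)%N -> (h' <= alpha i)%N -> Omega i i1 h T = Omega i i1 h' T -> h = h'.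
Proof.
move=> TN; wlog lt_hh' : h h' / (h < h')%N => [W le_h le_h' E|le_h le_h' E].
  case: (ltngtP h h') => [lt_hh'|lt_h'h|//]; first exact: W.
  exact: esym (W _ _ lt_h'h le_h' le_h (esym E)).
have := congr1 (fun U : filling alpha => U (i, inord h')) E.
rewrite !OmegaE (row_inordK le_h') leqnn tpermL leqNgt lt_hh' /= => Ei.
have := NAF_entry_row TN adj_neq le_h'; rewrite -alpha_i1 => /(_ le_h').
by rewrite /entry Ei eqxx.
Qed.

Local Open Scope ring_scope.

Definition Pi_weight T (h : nat) : Qqt :=
  (\prod_(r < h) rho i i1 T r) * (1 - rho i i1 T h).

Lemma PiE sigma T U : T \in NAF alpha sigma ->
  Pi i i1 T U = \sum_(h < (alpha i).+1) (U == Omega i i1 h T)%:R * Pi_weight T h.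
Proof.
move=> TN; rewrite /Pi; case: pickP => [h /eqP UE | notOmega]; last first.
  by rewrite big1 // => h _; rewrite notOmega mul0r.
rewrite -/(Pi_weight T h) [RHS](bigD1 h) // UE eqxx mul1r big1; first exact/esym/addr0.
move=> h' /andP[_ ne_h'h].
case: (Omega i i1 h T =P Omega i i1 h' T) => [E|_]; last by rewrite mul0r.
have /val_inj hh' := Omega_inj TN (ltnSE (ltn_ord h)) (ltnSE (ltn_ord h')) E.
by rewrite hh' eqxx in ne_h'h.
Qed.

Lemma sum_Pi_weight T : \sum_(h < (alpha i).+1) Pi_weight T h = 1.
Proof.
rewrite (sum_prod_telescope (rho i i1 T)) big_ord_recr /=.
by rewrite {2}/rho ltnn mulr0 subr0.
Qed.

Lemma Pi_weight_NAF sigma T h : T \in NAF alpha sigma -> Pi_weight T h != 0 ->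
  Omega i i1 h T \in NAF alpha (tperm i i1 * sigma)%g.
Proof.
move=> TN; rewrite /Pi_weight mulf_eq0 negb_or => /andP[/prodf_neq0 rho_ne0 rho_ne1].
apply: (Omega_NAF TN) => [r lt_rh|]; first exact: (rho_ne0 (Ordinal lt_rh)).
by rewrite eq_sym -subr_eq0.
Qed.

Lemma sum_NAF_Omega_weight sigma T h : T \in NAF alpha sigma ->
  \sum_(U in NAF alpha (tperm i i1 * sigma)%g) (U == Omega i i1 h T)%:R * Pi_weight T h
  = Pi_weight T h.
Proof.
move=> TN; rewrite (eq_bigr (fun U => if U == Omega i i1 h T then Pi_weight T h else 0));
  last by move=> U _; case: eqP => _; rewrite ?mul1r ?mul0r.
rewrite -big_mkcondr.
have [OmegaN | notOmegaN] := boolP (Omega i i1 h T \in NAF alpha (tperm i i1 * sigma)%g).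
  rewrite (big_pred1 (Omega i i1 h T)) // => U /=.
  by case: eqP => [->|]; rewrite ?OmegaN ?andbF.
rewrite big_pred0 => [|U]; last by case: eqP => [->|]; rewrite ?(negbTE notOmegaN) ?andbF.
by apply/esym/eqP; apply: contraNT notOmegaN; exact: Pi_weight_NAF.
Qed.

End EqualAdjacentColumns.

End Fillings.

Local Open Scope ring_scope.

Theorem corollary3p7 (n : nat) (alpha : 'I_n -> nat) (sigma : 'S_n)
    (i i1 : 'I_n) (Hi1 : val i1 = (val i).+1) (Heq : alpha i = alpha i1)
    (T : filling alpha) :
  T \in NAF alpha sigma ->
  \sum_(U in NAF alpha (tperm i i1 * sigma)%g) Pi i i1 T U = 1.
Proof.
move=> TN; rewrite (eq_bigr _ (fun U _ => PiE Hi1 Heq U TN)) exchange_big /=.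
rewrite -[RHS](sum_Pi_weight i i1 T); apply: eq_bigr => h _.
exact: sum_NAF_Omega_weight.
Qed.
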